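(* Let $m$ be even, $\Omega\subseteq\mathbb R^m$ open, and let $F\in\mathcal C^3(\Omega)$ take values in the $(m/2)$-vectors of $\mathbb R_{0,m}$. Then $F$ is inframonogenic in $\Omega$ if and only if both $F$ and $F(\underline x)\underline x$ are left $3$-monogenic in $\Omega$ (i.e. $\partial_{\underline x}^3F=0$ and $\partial_{\underline x}^3(F\underline x)=0$), and this holds if and only if both $F$ and $\underline xF(\underline x)$ are right $3$-monogenic in $\Omega$ (i.e. $F\partial_{\underline x}^3=0$ and $(\underline xF)\partial_{\underline x}^3=0$).
   Context: $\mathbb R_{0,m}$ is the $2^m$-dimensional real Clifford algebra generated by the orthonormal basis $e_1,\dots,e_m$ of $\mathbb R^m$ with relations $e_je_k+e_ke_j=-2\delta_{jk}$; it has basis $e_A=e_{j_1}\cdots e_{j_k}$, $A=\{j_1<\dots<j_k\}$, and the $k$-vectors are $\sum_{|A|=k}a_Ae_A$, $a_A\in\mathbb R$. A point of $\mathbb R^m$ is identified with $\underline x=\sum_j x_je_j$. The Dirac operator $\partial_{\underline x}=\sum_j e_j\partial_{x_j}$ acts from the left, $\partial_{\underline x}f=\sum_j e_j\partial_{x_j}f$, or from the right, $f\partial_{\underline x}=\sum_j(\partial_{x_j}f)e_j$; powers denote iterated application on the same side. $f\in\mathcal C^2$ is inframonogenic if $\partial_{\underline x}f\partial_{\underline x}=\sum_{i,j}e_i(\partial_{x_i}\partial_{x_j}f)e_j=0$. *)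

From Stdlib Require Import Reals ClassicalEpsilon.
From mathcomp Require Import all_boot.
Set Implicit Arguments. Unset Strict Implicit. Unset Printing Implicit Defensive.

Local Open Scope R_scope.

Definition pt (m : nat) := 'I_m -> R.

(* Elements of the Clifford algebra R_{0,m}: coefficient a_A of each basis
   blade e_A, A a subset of {1..m} (here {set 'I_m}). *)
Definition Cl (m : nat) := {set 'I_m} -> R.

Definition cl_zero (m : nat) : Cl m := fun _ => 0.
Definition cl_add (m : nat) (u v : Cl m) : Cl m := fun A => u A + v A.
Definition cl_sum (m : nat) (I : finType) (f : I -> Cl m) : Cl m :=
  fun A => \big[Rplus/0]_(i : I) f i A.

(* e_A e_B = sign(A,B) e_{A Δ B} with e_j e_k + e_k e_j = -2 δ_jk:
   sign = (-1)^(#{(a,b) in A x B | a > b} + #(A ∩ B)). *)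
Definition blade_sign (m : nat) (A B : {set 'I_m}) : R :=
  (-1) ^ (#|[set p : 'I_m * 'I_m | (p.1 \in A) && (p.2 \in B) && (p.2 < p.1)%N]|
          + #|A :&: B|)%nat.

Definition symdiff (m : nat) (A B : {set 'I_m}) : {set 'I_m} :=
  (A :\: B) :|: (B :\: A).

Definition cl_mul (m : nat) (u v : Cl m) : Cl m := fun C =>
  \big[Rplus/0]_(A : {set 'I_m}) \big[Rplus/0]_(B : {set 'I_m} | symdiff A B == C)
     (u A * v B * blade_sign A B).

Definition cl_e (m : nat) (j : 'I_m) : Cl m :=
  fun A => if A == [set j] then 1 else 0.
Definition cl_vec (m : nat) (x : pt m) : Cl m :=
  cl_sum (fun j : 'I_m => fun A => x j * cl_e j A).

Definition is_kvector (m k : nat) (u : Cl m) : Prop :=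
  forall A : {set 'I_m}, #|A| <> k -> u A = 0.

Definition shift (m : nat) (x : pt m) (j : 'I_m) (t : R) : pt m :=
  fun i => if i == j then x i + t else x i.

Definition is_open (m : nat) (Om : pt m -> Prop) : Prop :=
  forall x, Om x -> exists d, 0 < d /\
    forall y : pt m, (forall i, Rabs (y i - x i) < d) -> Om y.

Definition cont_on (m : nat) (Om : pt m -> Prop) (G : pt m -> R) : Prop :=
  forall x, Om x -> forall eps, 0 < eps -> exists d, 0 < d /\
    forall y, Om y -> (forall i, Rabs (y i - x i) < d) -> Rabs (G y - G x) < eps.

(* The partial derivative d/dx_j of a real function (its value, when it exists;
   derivatives are unique, so the choice is canonical). *)
Definition pd (m : nat) (j : 'I_m) (G : pt m -> R) (x : pt m) : R :=
  epsilon (inhabits 0) (fun l => derivable_pt_lim (fun t => G (shift x j t)) 0 l).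

Definition pdiff_on (m : nat) (Om : pt m -> Prop) (j : 'I_m) (G : pt m -> R) : Prop :=
  forall x, Om x -> exists l, derivable_pt_lim (fun t => G (shift x j t)) 0 l.

Fixpoint Ck (m : nat) (k : nat) (Om : pt m -> Prop) (G : pt m -> R) : Prop :=
  match k with
  | O => cont_on Om G
  | S k' => cont_on Om G /\ forall j, pdiff_on Om j G /\ Ck k' Om (pd j G)
  end.

Definition CkCl (m k : nat) (Om : pt m -> Prop) (F : pt m -> Cl m) : Prop :=
  forall A, Ck k Om (fun x => F x A).

Definition pdCl (m : nat) (j : 'I_m) (F : pt m -> Cl m) : pt m -> Cl m :=
  fun x A => pd j (fun y => F y A) x.

Definition dirac_l (m : nat) (F : pt m -> Cl m) : pt m -> Cl m :=
  fun x => cl_sum (fun j : 'I_m => cl_mul (cl_e j) (pdCl j F x)).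
Definition dirac_r (m : nat) (F : pt m -> Cl m) : pt m -> Cl m :=
  fun x => cl_sum (fun j : 'I_m => cl_mul (pdCl j F x) (cl_e j)).

Definition zero_on (m : nat) (Om : pt m -> Prop) (F : pt m -> Cl m) : Prop :=
  forall x, Om x -> forall A, F x A = 0.

Definition inframonogenic (m : nat) (Om : pt m -> Prop) (F : pt m -> Cl m) : Prop :=
  zero_on Om (fun x => cl_sum (fun p : 'I_m * 'I_m =>
     cl_mul (cl_mul (cl_e p.1) (pdCl p.1 (pdCl p.2 F) x)) (cl_e p.2))).

Definition left_3_monogenic (m : nat) (Om : pt m -> Prop) (F : pt m -> Cl m) : Prop :=
  zero_on Om (dirac_l (dirac_l (dirac_l F))).
Definition right_3_monogenic (m : nat) (Om : pt m -> Prop) (F : pt m -> Cl m) : Prop :=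
  zero_on Om (dirac_r (dirac_r (dirac_r F))).

From HB Require Import structures.
From Stdlib Require Import Reals Lra ClassicalEpsilon FunctionalExtensionality.
From mathcomp Require Import all_boot.
Set Implicit Arguments. Unset Strict Implicit. Unset Printing Implicit Defensive.
Set Warnings "-notation-overridden,-redundant-canonical-projection".
Local Open Scope R_scope.

(* Everything rests on three algebraic facts:
   left and right multiplications commute, each family satisfies the Clifford
   relations e_b e_c + e_c e_b = -2 delta_bc, and the sandwich
   u |-> sum_a e_a u e_a equals +-(m - 2k) u on k-vectors, hence kills
   (m/2)-vectors.

   For a Dirac operator D (left or right) and x acting on the other side, the
   Leibniz rule reads D(x G) = x (D G) + sum_j e_j G e_j.  Then
     D^2 F = -Laplacian F,   D^3 (x F) = x D^3 F - 2 sum_ab e_a (d_a d_b F) e_b,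
   and differentiating the inframonogenic equation gives D^3 F = 0.  The
   criterion is proved once for an abstract pair of sign tables satisfying
   these relations (section InframonogenicCriterion) and instantiated with
   (sL, sR) and (sR, sL) for the two equivalences of the theorem. *)

HB.instance Definition _ := Monoid.isComLaw.Build R 0 Rplus
  (fun a b c => esym (Rplus_assoc a b c)) Rplus_comm Rplus_0_l.

Lemma sum_mulr (I : finType) (P : pred I) (c : R) (f : I -> R) :
  \big[Rplus/0]_(i | P i) (c * f i) = c * \big[Rplus/0]_(i | P i) f i.
Proof. elim/big_rec2: _ => [|i y1 y2 _ ->]; lra. Qed.

Lemma sum_mull (I : finType) (P : pred I) (c : R) (f : I -> R) :
  \big[Rplus/0]_(i | P i) (f i * c) = (\big[Rplus/0]_(i | P i) f i) * c.
Proof. elim/big_rec2: _ => [|i y1 y2 _ ->]; lra. Qed.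

Lemma sum_opp (I : finType) (f : I -> R) :
  \big[Rplus/0]_(i : I) (- f i) = - \big[Rplus/0]_i f i.
Proof. elim/big_rec2: _ => [|i y1 y2 _ ->]; lra. Qed.

Lemma sum_single (I : finType) (i0 : I) (f : I -> R) :
  (forall i, i != i0 -> f i = 0) -> \big[Rplus/0]_(i : I) f i = f i0.
Proof.
move=> H; rewrite (bigD1 i0) //= big1 ?Rplus_0_r // => i /andP[_ Hi]; exact: H.
Qed.
Arguments sum_single [I] i0 [f].

Lemma sum_delta (I : finType) (b : I) (f : I -> R) :
  \big[Rplus/0]_(c : I) (if b == c then f c else 0) = f b.
Proof.
rewrite (sum_single b); first by rewrite eqxx.
by move=> c Hc; rewrite eq_sym (negbTE Hc).
Qed.

Lemma iter_plus (n : nat) (c : R) : iter n (Rplus c) 0 = INR n * c.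
Proof. elim: n => [|n IH]; first by rewrite /=; lra. rewrite iterS IH S_INR; lra. Qed.

Definition sg (b : bool) : R := if b then -1 else 1.

Lemma sgD a b : sg a * sg b = sg (a (+) b).
Proof. by case: a; case: b => /=; rewrite /sg; lra. Qed.

Lemma sg_neg b : sg (~~ b) = - sg b.
Proof. case: b; rewrite /sg /=; lra. Qed.

Lemma pow_m1 (n : nat) : (-1) ^ n = sg (odd n).
Proof. elim: n => [|n IH] /=; first by rewrite /sg. rewrite IH /sg; case: (odd n) => /=; lra. Qed.

(* Closes a goal  u * sg b1 * sg b2 = u * sg b3  once the booleans b1, b2, b3
   are built from finitely many parities and comparisons. *)
Ltac sign_by_cases :=
  rewrite ?Rmult_assoc ?sgD; congr (_ * sg _);
  repeat match goal with
  | |- context [odd ?x] => case: (odd x)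
  | |- context [(?a <= ?b)%N] => case: (a <= b)%N
  end; by [].

Section BladeSigns.
Variable m : nat.
Implicit Types (A B C X Y : {set 'I_m}) (a b c j : 'I_m).

(* tog j X is the blade index of e_j e_X (up to sign): j toggled in X. *)
Definition tog j X := symdiff [set j] X.

Lemma in_tog j X x : (x \in tog j X) = (x == j) (+) (x \in X).
Proof. rewrite /tog /symdiff !inE; by case: (x == j); case: (x \in X). Qed.

Lemma togK j X : tog j (tog j X) = X.
Proof. apply/setP => x; rewrite !in_tog; by case: (x == j); case: (x \in X). Qed.

Lemma togC a c X : tog a (tog c X) = tog c (tog a X).
Proof. apply/setP => x; rewrite !in_tog; by case: (x == a); case: (x == c); case: (x \in X). Qed.

Lemma symdiffC A B : symdiff A B = symdiff B A.
Proof. by rewrite /symdiff setUC. Qed.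

Lemma tog_eq j B C : (symdiff [set j] B == C) = (B == tog j C).
Proof.
apply/eqP/eqP => [<-|->]; first by rewrite -/(tog j B) togK.
by rewrite -/(tog j (tog j C)) togK.
Qed.

Lemma odd_card_tog j Y : odd #|tog j Y| = ~~ odd #|Y|.
Proof.
case Hj: (j \in Y).
- have -> : tog j Y = Y :\ j.
    apply/setP => x; rewrite in_tog !inE; case: eqP => [->|] //=; by rewrite Hj.
  by rewrite (cardsD1 j Y) Hj /= negbK.
- have -> : tog j Y = j |: Y.
    apply/setP => x; rewrite in_tog !inE; case: eqP => [->|] //=; by rewrite Hj.
  by rewrite cardsU1 Hj.
Qed.

Lemma odd_cnt_tog (P : pred 'I_m) j X :
  odd #|[set x in tog j X | P x]| = odd #|[set x in X | P x]| (+) P j.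
Proof.
case HP: (P j).
- have -> : [set x in tog j X | P x] = tog j [set x in X | P x].
    apply/setP => x; rewrite !inE; case: (x =P j) => [->|_]; rewrite ?HP;
    by case: (_ \in X); case: (P x).
  by rewrite odd_card_tog addbT.
- have -> : [set x in tog j X | P x] = [set x in X | P x].
    apply/setP => x; rewrite !inE; case: (x =P j) => [->|_]; rewrite ?HP;
    by case: (_ \in X); case: (P x).
  by rewrite addbF.
Qed.

Definition cle j X := #|[set x in X | (x <= j)%N]|.
Definition cge j X := #|[set x in X | (j <= x)%N]|.

Lemma card_setI1 j X : #|[set j] :&: X| = (j \in X).
Proof.
case Hj: (j \in X).
- have -> : [set j] :&: X = [set j]. apply/setP => x; rewrite !inE; case: eqP => [->|]//=.
  by rewrite cards1.
- have -> : [set j] :&: X = set0. apply/setP => x; rewrite !inE; case: eqP => [->|]//=.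
  by rewrite cards0.
Qed.

Lemma card_setI1r j X : #|X :&: [set j]| = (j \in X).
Proof. by rewrite setIC card_setI1. Qed.

Lemma blade_sign1X j X : blade_sign [set j] X = sg (odd (cle j X)).
Proof.
rewrite /blade_sign pow_m1 card_setI1.
have -> : [set p : 'I_m * 'I_m | (p.1 \in [set j]) && (p.2 \in X) && (p.2 < p.1)%N]
   = (fun b => (j, b)) @: [set x in X | (x < j)%N].
  apply/setP => [[p1 p2]]; rewrite !inE /=; apply/idP/imsetP.
  - case/andP => /andP[/eqP -> H2] H3; exists p2 => //; by rewrite inE H2.
  - case=> b; rewrite inE => /andP[Hb Hbj] [-> ->]; by rewrite eqxx Hb Hbj.
rewrite card_imset; last by move=> x y [].
rewrite /cle; case Hj: (j \in X).
- have -> : [set x in X | (x <= j)%N] = j |: [set x in X | (x < j)%N].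
    apply/setP => x; rewrite !inE; case: (x =P j) => [->|Hne]; first by rewrite Hj leqnn ltnn ?eqxx.
    rewrite leq_eqVlt (_ : (nat_of_ord x == nat_of_ord j) = false) //.
    by apply/negbTE; apply/eqP => /val_inj.
  by rewrite cardsU1 !inE ltnn andbF /= addnC.
- have -> : [set x in X | (x <= j)%N] = [set x in X | (x < j)%N].
    apply/setP => x; rewrite !inE; case: (x =P j) => [->|Hne]; first by rewrite Hj.
    rewrite leq_eqVlt (_ : (nat_of_ord x == nat_of_ord j) = false) //.
    by apply/negbTE; apply/eqP => /val_inj.
  by rewrite addn0.
Qed.

Lemma blade_signX1 X j : blade_sign X [set j] = sg (odd (cge j X)).
Proof.
rewrite /blade_sign pow_m1 card_setI1r.
have -> : [set p : 'I_m * 'I_m | (p.1 \in X) && (p.2 \in [set j]) && (p.2 < p.1)%N]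
   = (fun a => (a, j)) @: [set x in X | (j < x)%N].
  apply/setP => [[p1 p2]]; rewrite !inE /=; apply/idP/imsetP.
  - case/andP => /andP[H1 /eqP ->] H3; exists p1 => //; by rewrite inE H1.
  - case=> b; rewrite inE => /andP[Hb Hbj] [-> ->]; by rewrite eqxx Hb Hbj.
rewrite card_imset; last by move=> x y [].
rewrite /cge; case Hj: (j \in X).
- have -> : [set x in X | (j <= x)%N] = j |: [set x in X | (j < x)%N].
    apply/setP => x; rewrite !inE; case: (x =P j) => [->|Hne]; first by rewrite Hj leqnn ltnn ?eqxx.
    rewrite leq_eqVlt (_ : (nat_of_ord j == nat_of_ord x) = false) //.
    by apply/negbTE; apply/eqP => /val_inj /esym.
  by rewrite cardsU1 !inE ltnn andbF /= addnC.
- have -> : [set x in X | (j <= x)%N] = [set x in X | (j < x)%N].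
    apply/setP => x; rewrite !inE; case: (x =P j) => [->|Hne]; first by rewrite Hj.
    rewrite leq_eqVlt (_ : (nat_of_ord j == nat_of_ord x) = false) //.
    by apply/negbTE; apply/eqP => /val_inj /esym.
  by rewrite addn0.
Qed.

Lemma cle_tog j c X : odd (cle j (tog c X)) = odd (cle j X) (+) (c <= j)%N.
Proof. by rewrite /cle (odd_cnt_tog (fun x : 'I_m => (x <= j)%N)). Qed.

Lemma cge_tog j c X : odd (cge j (tog c X)) = odd (cge j X) (+) (j <= c)%N.
Proof. by rewrite /cge (odd_cnt_tog (fun x : 'I_m => (j <= x)%N)). Qed.

(* Every element of C is counted once by cle a C + cge a C, except a itself. *)
Lemma cge_cle a C : (cge a C + cle a C = #|C| + (a \in C))%N.
Proof.
rewrite /cge /cle -cardsUI.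
have -> : [set x in C | (a <= x)%N] :|: [set x in C | (x <= a)%N] = C.
  apply/setP => x; rewrite !inE; case: (x \in C) => //=; exact: leq_total.
have -> : [set x in C | (a <= x)%N] :&: [set x in C | (x <= a)%N] = C :&: [set a].
  apply/setP => x; rewrite !inE.
  case: (x \in C) => //=; apply/idP/idP => [/andP[H1 H2]|/eqP ->]; last by rewrite leqnn.
  by apply/eqP/val_inj/eqP; rewrite eqn_leq H1 H2.
by rewrite card_setI1r.
Qed.

Lemma sum_sg_in C : \big[Rplus/0]_(a : 'I_m) sg (a \in C) = INR m - 2 * INR #|C|.
Proof.
rewrite (bigID (fun a => a \in C)) /=.
rewrite (eq_bigr (fun _ => -1)); last by move=> a ->.
rewrite [X in _ + X = _](eq_bigr (fun _ => 1)); last by move=> a /negbTE ->.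
rewrite !big_const !iter_plus.
have Hc := cardsC C; rewrite card_ord in Hc.
have HI : INR m = INR #|C| + INR #|~: C| by rewrite -plus_INR plusE Hc.
rewrite (_ : #|(fun a : 'I_m => a \notin C)| = #|~: C|); last by apply: eq_card => x; rewrite !inE.
rewrite [X in INR X * -1](_ : _ = #|C|); last by apply: eq_card => x.
have H : forall a b c : R, c = a + b -> a * -1 + b * 1 = c - 2 * a by move=> *; lra.
exact: H.
Qed.

End BladeSigns.

(* Multiplying by a basis vector e_j only permutes the blades (C <-> tog j C)
   and attaches a sign; bmul s j u is this operation for a sign table s. *)
Definition bmul (m : nat) (s : 'I_m -> {set 'I_m} -> R) (j : 'I_m) (u : Cl m) : Cl m :=
  fun C => u (tog j C) * s j C.

Definition sL {m : nat} (j : 'I_m) (C : {set 'I_m}) : R := blade_sign [set j] (tog j C).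
Definition sR {m : nat} (j : 'I_m) (C : {set 'I_m}) : R := blade_sign (tog j C) [set j].

(* Le j u = e_j u and Re j u = u e_j (lemmas mul_eL, mul_eR below). *)
Notation Le := (bmul sL).
Notation Re := (bmul sR).

Definition anticommuting (m : nat) (s : 'I_m -> {set 'I_m} -> R) : Prop :=
  forall b c (u : Cl m) C,
    bmul s b (bmul s c u) C + bmul s c (bmul s b u) C = if b == c then -2 * u C else 0.

(* The map u |-> sum_a e_a u e_a, written with two sign tables so that it
   serves both for left/right and right/left multiplications. *)
Definition sandwich (m : nat) (s t : 'I_m -> {set 'I_m} -> R) (u : Cl m) : Cl m :=
  cl_sum (fun a => bmul s a (bmul t a u)).

Section BasisMultiplication.
Variable m : nat.
Implicit Types (C D : {set 'I_m}) (a b c j : 'I_m) (u : Cl m).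

Lemma mul_eL j u : cl_mul (cl_e j) u = Le j u.
Proof.
apply: functional_extensionality => C; rewrite /cl_mul (sum_single [set j]).
- rewrite /cl_e eqxx (eq_bigl (fun B => B == tog j C)); last by move=> B; rewrite tog_eq.
  rewrite big_pred1_eq /bmul /sL; lra.
- move=> A HA; apply: big1 => B _; rewrite /cl_e (negbTE HA); lra.
Qed.

Lemma mul_eR j u : cl_mul u (cl_e j) = Re j u.
Proof.
apply: functional_extensionality => C; rewrite /cl_mul (sum_single (tog j C)).
- rewrite big_mkcond (sum_single [set j]).
  + rewrite symdiffC -/(tog j (tog j C)) togK eqxx /cl_e eqxx /bmul /sR; lra.
  + move=> B HB; rewrite /cl_e (negbTE HB); case: ifP => _; lra.
- move=> A HA; rewrite big_mkcond; apply: big1 => B _.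
  case: ifP => // HB; rewrite /cl_e; case: eqP => [HBj|_]; last lra.
  subst B; move: HB; rewrite symdiffC tog_eq => /eqP HC.
  by move: HA; rewrite HC eqxx.
Qed.

Lemma LeLe_sign b c u D :
  Le b (Le c u) (tog b (tog c D)) = u D * sg (odd (cle c D) (+) odd (cle b D) (+) (c <= b)%N).
Proof. rewrite /bmul /sL togK togK !blade_sign1X cle_tog; sign_by_cases. Qed.

Lemma ReRe_sign b c u D :
  Re b (Re c u) (tog b (tog c D)) = u D * sg (odd (cge c D) (+) odd (cge b D) (+) (b <= c)%N).
Proof. rewrite /bmul /sR togK togK !blade_signX1 cge_tog; sign_by_cases. Qed.

Lemma LeRe_sign a c u D :
  Le a (Re c u) (tog a (tog c D)) = u D * sg (odd (cge c D) (+) odd (cle a D) (+) (c <= a)%N).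
Proof. rewrite /bmul /sL /sR togK togK blade_sign1X blade_signX1 cle_tog; sign_by_cases. Qed.

Lemma ReLe_sign a c u D :
  Re c (Le a u) (tog c (tog a D)) = u D * sg (odd (cge c D) (+) odd (cle a D) (+) (c <= a)%N).
Proof. rewrite /bmul /sL /sR togK togK blade_sign1X blade_signX1 cge_tog; sign_by_cases. Qed.

Lemma LR_comm a c u : Le a (Re c u) = Re c (Le a u).
Proof.
apply: functional_extensionality => C.
pose D := tog c (tog a C).
have -> : C = tog a (tog c D) by rewrite /D togK togK.
rewrite LeRe_sign -ReLe_sign /D; congr (Re c (Le a u) _).
by apply/setP => x; rewrite !in_tog; case: (x == a); case: (x == c).
Qed.

Lemma ltn_sym_neq b c : b != c -> (c <= b)%N = ~~ (b <= c)%N.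
Proof.
by move=> Hbc; rewrite leqNgt ltn_neqAle (_ : (nat_of_ord b != nat_of_ord c) = true).
Qed.

Lemma Le_anticomm : anticommuting (@sL m).
Proof.
move=> b c u C; case: (b =P c) => [<-|/eqP Hbc].
- have -> : C = tog b (tog b C) by rewrite togK.
  rewrite LeLe_sign togK leqnn addbb addFb /sg /=; lra.
- have -> : C = tog b (tog c (tog c (tog b C))) by rewrite togK togK.
  set D := tog c (tog b C).
  rewrite LeLe_sign togC LeLe_sign (ltn_sym_neq Hbc).
  rewrite (_ : odd (cle c D) (+) odd (cle b D) (+) ~~ (b <= c)%N =
     ~~ (odd (cle b D) (+) odd (cle c D) (+) (b <= c)%N)); last first.
    by case: (odd (cle c D)); case: (odd (cle b D)); case: (b <= c)%N.
  rewrite sg_neg; lra.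
Qed.

Lemma Re_anticomm : anticommuting (@sR m).
Proof.
move=> b c u C; case: (b =P c) => [<-|/eqP Hbc].
- have -> : C = tog b (tog b C) by rewrite togK.
  rewrite ReRe_sign togK leqnn addbb addFb /sg /=; lra.
- have -> : C = tog b (tog c (tog c (tog b C))) by rewrite togK togK.
  set D := tog c (tog b C).
  rewrite ReRe_sign togC ReRe_sign (ltn_sym_neq Hbc).
  rewrite (_ : odd (cge c D) (+) odd (cge b D) (+) (b <= c)%N =
     ~~ (odd (cge b D) (+) odd (cge c D) (+) ~~ (b <= c)%N)); last first.
    by case: (odd (cge c D)); case: (odd (cge b D)); case: (b <= c)%N.
  rewrite sg_neg; lra.
Qed.

Lemma LeRe_diag a u C : Le a (Re a u) C = u C * sg (odd #|C| (+) (a \in C) (+) true).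
Proof.
have -> : C = tog a (tog a C) by rewrite togK.
by rewrite LeRe_sign togK leqnn -oddD cge_cle oddD oddb.
Qed.

(* On k-vectors, sum_a e_a u e_a = (-1)^(k+1) (m - 2k) u; it vanishes when 2k = m. *)
Lemma sandwich_kvector k u :
  (k + k)%N = m -> is_kvector k u -> sandwich (@sL m) (@sR m) u = @cl_zero m.
Proof.
move=> Hk Hu; apply: functional_extensionality => C.
rewrite /sandwich /cl_sum /cl_zero.
rewrite (eq_bigr (fun a => u C * (sg (~~ odd #|C|) * sg (a \in C)))); last first.
  move=> a _; rewrite LeRe_diag sgD; congr (_ * sg _); by case: (odd _); case: (_ \in _).
rewrite sum_mulr sum_mulr sum_sg_in.
case: (#|C| =P k) => [HC|HC]; last by rewrite (Hu C HC); lra.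
rewrite HC -Hk plus_INR; lra.
Qed.

End BasisMultiplication.

Arguments Le_anticomm {m}.
Arguments Re_anticomm {m}.

Section Linearity.
Variable m : nat.
Implicit Types (s : 'I_m -> {set 'I_m} -> R) (j : 'I_m) (u v : Cl m).

Definition cl_opp u : Cl m := fun C => - u C.
Definition cl_scale (r : R) u : Cl m := fun C => r * u C.

Lemma zero_fun u : (forall A, u A = 0) -> u = @cl_zero m.
Proof. by move=> H; apply: functional_extensionality => A; rewrite H. Qed.

Lemma cl_add0 u : cl_add u (@cl_zero m) = u.
Proof. apply: functional_extensionality => C; rewrite /cl_add /cl_zero; lra. Qed.

Lemma cl_0add u : cl_add (@cl_zero m) u = u.
Proof. apply: functional_extensionality => C; rewrite /cl_add /cl_zero; lra. Qed.

Lemma cl_opp_zero : cl_opp (@cl_zero m) = @cl_zero m.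
Proof. apply: functional_extensionality => C; rewrite /cl_opp /cl_zero; lra. Qed.

Lemma cl_sum_ext (I : finType) (f g : I -> Cl m) : (forall i, f i = g i) -> cl_sum f = cl_sum g.
Proof. by move=> H; congr cl_sum; apply: functional_extensionality. Qed.

Lemma cl_sum_exch (I J : finType) (f : I -> J -> Cl m) :
  cl_sum (fun i => cl_sum (fun y => f i y)) = cl_sum (fun y => cl_sum (fun i => f i y)).
Proof. apply: functional_extensionality => C; rewrite /cl_sum; exact: exchange_big. Qed.

Lemma cl_sum_pair (I J : finType) (f : I -> J -> Cl m) :
  cl_sum (fun p : I * J => f p.1 p.2) = cl_sum (fun i => cl_sum (fun y => f i y)).
Proof. apply: functional_extensionality => C; by rewrite /cl_sum pair_bigA. Qed.

Lemma cl_sum_add (I : finType) (f g : I -> Cl m) :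
  cl_sum (fun i => cl_add (f i) (g i)) = cl_add (cl_sum f) (cl_sum g).
Proof. apply: functional_extensionality => C; by rewrite /cl_sum /cl_add big_split. Qed.

Lemma cl_sum_opp (I : finType) (f : I -> Cl m) :
  cl_sum (fun i => cl_opp (f i)) = cl_opp (cl_sum f).
Proof. apply: functional_extensionality => C; by rewrite /cl_sum /cl_opp sum_opp. Qed.

Lemma cl_sum_scale (I : finType) r (f : I -> Cl m) :
  cl_sum (fun i => cl_scale r (f i)) = cl_scale r (cl_sum f).
Proof. apply: functional_extensionality => C; by rewrite /cl_sum /cl_scale sum_mulr. Qed.

Lemma cl_sum_zero (I : finType) : cl_sum (fun i : I => @cl_zero m) = @cl_zero m.
Proof. apply: functional_extensionality => C; rewrite /cl_sum /cl_zero; exact: big1. Qed.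

Lemma cl_sum_delta (b : 'I_m) (u : 'I_m -> Cl m) :
  cl_sum (fun l => if l == b then u l else @cl_zero m) = u b.
Proof.
apply: functional_extensionality => C; rewrite /cl_sum (sum_single b) ?eqxx //.
by move=> i Hi; rewrite (negbTE Hi).
Qed.

Lemma bmul_sum (I : finType) s j (f : I -> Cl m) :
  bmul s j (cl_sum f) = cl_sum (fun i => bmul s j (f i)).
Proof. apply: functional_extensionality => C; by rewrite /bmul /cl_sum sum_mull. Qed.

Lemma bmul_add s j u v : bmul s j (cl_add u v) = cl_add (bmul s j u) (bmul s j v).
Proof. apply: functional_extensionality => C; rewrite /bmul /cl_add; lra. Qed.

Lemma bmul_opp s j u : bmul s j (cl_opp u) = cl_opp (bmul s j u).
Proof. apply: functional_extensionality => C; rewrite /bmul /cl_opp; lra. Qed.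

Lemma bmul_scale s j r u : bmul s j (cl_scale r u) = cl_scale r (bmul s j u).
Proof. apply: functional_extensionality => C; rewrite /bmul /cl_scale; lra. Qed.

Lemma bmul_zero s j : bmul s j (@cl_zero m) = @cl_zero m.
Proof. apply: functional_extensionality => C; rewrite /bmul /cl_zero; lra. Qed.

Lemma sandwich_opp s t u : sandwich s t (cl_opp u) = cl_opp (sandwich s t u).
Proof. by rewrite /sandwich -cl_sum_opp; apply: cl_sum_ext => a; rewrite !bmul_opp. Qed.

Lemma sandwich_sum s t (I : finType) (g : I -> Cl m) :
  sandwich s t (cl_sum g) = cl_sum (fun i => sandwich s t (g i)).
Proof.
rewrite /sandwich -cl_sum_exch; apply: cl_sum_ext => a.
by rewrite !bmul_sum.
Qed.

End Linearity.

Arguments cl_sum_zero {m} I.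
Arguments cl_opp_zero {m}.

Section Anticommuting.
Variables (m : nat) (s t : 'I_m -> {set 'I_m} -> R).
Hypothesis anti_s : anticommuting s.
Implicit Types (b c : 'I_m) (u : Cl m).

Lemma anticomm_sum (X : 'I_m -> 'I_m -> Cl m) : (forall b c, X b c = X c b) ->
  cl_sum (fun b => bmul s b (cl_sum (fun c => bmul s c (X b c)))) =
  cl_opp (cl_sum (fun b => X b b)).
Proof.
move=> HX; apply: functional_extensionality => C; rewrite /cl_sum /cl_opp.
under eq_bigr => b _ do rewrite bmul_sum /cl_sum.
set S := \big[Rplus/0]_(b : 'I_m) _.
have S_swap : S = \big[Rplus/0]_(b : 'I_m) \big[Rplus/0]_(c : 'I_m) bmul s c (bmul s b (X b c)) C.
  rewrite /S exchange_big; apply: eq_bigr => b _; apply: eq_bigr => c _; by rewrite HX.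
have : S + S = \big[Rplus/0]_(b : 'I_m) (-2 * X b b C).
  rewrite {1}S_swap /S -big_split; apply: eq_bigr => b _; rewrite -big_split /=.
  under eq_bigr => c _ do rewrite Rplus_comm anti_s.
  exact: (sum_delta b (fun c => -2 * X b c C)).
rewrite sum_mulr; lra.
Qed.

Hypothesis comm_st : forall b c u, bmul s b (bmul t c u) = bmul t c (bmul s b u).

Lemma sandwich_bmul b u :
  sandwich s t (bmul s b u) =
  cl_add (cl_opp (bmul s b (sandwich s t u))) (cl_scale (-2) (bmul t b u)).
Proof.
apply: functional_extensionality => C.
rewrite /sandwich /cl_add /cl_opp /cl_scale bmul_sum /cl_sum -sum_opp.
rewrite -(sum_delta b (fun c => -2 * bmul t c u C)) -big_split.
apply: eq_bigr => c _ /=; rewrite -comm_st.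
have := anti_s c b (bmul t c u) C; rewrite eq_sym.
case: (b == c) => /=; lra.
Qed.

Lemma sandwich_swap u : sandwich t s u = sandwich s t u.
Proof. by apply: cl_sum_ext => a; rewrite comm_st. Qed.

End Anticommuting.

Section Derivatives.
Variable m : nat.
Implicit Types (j l : 'I_m) (x y z : pt m).

Definition DL j (G : pt m -> R) x (d : R) := derivable_pt_lim (fun t => G (shift x j t)) 0 d.
Definition CDL j (G : pt m -> Cl m) x (L : Cl m) := forall C, DL j (fun z => G z C) x (L C).

Lemma shift0 x j : shift x j 0 = x.
Proof. apply: functional_extensionality => i; rewrite /shift; case: (i == j) => //; lra. Qed.

Lemma pd_eq j G x d : DL j G x d -> pd j G x = d.
Proof.
move=> H; rewrite /pd.
have := epsilon_spec (inhabits 0) (fun r : R => derivable_pt_lim (fun t => G (shift x j t)) 0 r)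
  (ex_intro _ d H).
move=> H2; exact: (uniqueness_limite _ _ _ _ H2 H).
Qed.

Lemma DL_pd Om j G x : pdiff_on Om j G -> Om x -> DL j G x (pd j G x).
Proof.
move=> H Hx; have [d Hd] := H x Hx; by rewrite (pd_eq Hd).
Qed.

Lemma DL_fext j G H x d : (forall z, G z = H z) -> DL j G x d -> DL j H x d.
Proof. move=> E; have -> : H = G by apply: functional_extensionality => z; rewrite E. done. Qed.

Lemma DL_plus j G H x d1 d2 : DL j G x d1 -> DL j H x d2 -> DL j (fun z => G z + H z) x (d1 + d2).
Proof. move=> H1 H2; exact: (derivable_pt_lim_plus _ _ _ _ _ H1 H2). Qed.

Lemma DL_scal j G x d (r : R) : DL j G x d -> DL j (fun z => r * G z) x (r * d).
Proof. move=> H1; exact: (derivable_pt_lim_scal _ r _ _ H1). Qed.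

Lemma DL_scalr j G x d (r : R) : DL j G x d -> DL j (fun z => G z * r) x (d * r).
Proof.
move=> H1; have := DL_scal r H1; rewrite Rmult_comm.
apply: DL_fext => z; lra.
Qed.

Lemma DL_const j x (r : R) : DL j (fun _ => r) x 0.
Proof. exact: derivable_pt_lim_const. Qed.

Lemma DL_mul j G H x d1 d2 : DL j G x d1 -> DL j H x d2 ->
  DL j (fun z => G z * H z) x (d1 * H x + G x * d2).
Proof.
move=> H1 H2; have := derivable_pt_lim_mult _ _ _ _ _ H1 H2.
by rewrite /DL /mult_fct shift0.
Qed.

Lemma DL_coord j l x : DL j (fun z => z l) x (if l == j then 1 else 0).
Proof.
rewrite /DL /shift; case: (l == j).
- have := derivable_pt_lim_plus _ _ 0 0 1 (derivable_pt_lim_const (x l) 0) (derivable_pt_lim_id 0).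
  rewrite Rplus_0_l; by [].
- exact: derivable_pt_lim_const.
Qed.

Lemma DL_sum (I : finType) j (g : I -> pt m -> R) x (d : I -> R) :
  (forall i, DL j (g i) x (d i)) ->
  DL j (fun z => \big[Rplus/0]_(i : I) g i z) x (\big[Rplus/0]_(i : I) d i).
Proof.
move=> H.
suff : forall r : seq I,
    DL j (fun z => \big[Rplus/0]_(i <- r) g i z) x (\big[Rplus/0]_(i <- r) d i).
  by apply.
elim => [|i r IH].
- rewrite big_nil; apply: (DL_fext (G := fun _ => 0)); first by move=> z; rewrite big_nil.
  exact: DL_const.
- rewrite big_cons; apply: (DL_fext (G := fun z => g i z + \big[Rplus/0]_(k <- r) g k z)).
    by move=> z; rewrite big_cons.
  exact: DL_plus.
Qed.

Lemma DL_ext Om j G H x d : is_open Om -> Om x -> (forall z, Om z -> G z = H z) ->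
  DL j G x d -> DL j H x d.
Proof.
move=> Ho Hx E HG; have [e [He Hb]] := Ho x Hx.
apply: (derivable_pt_lim_locally_ext _ _ 0 (- e) e d _ _ HG); first lra.
move=> t Ht; apply: E; apply: Hb => i; rewrite /shift; case: (i == j).
- rewrite (_ : x i + t - x i = t); last lra. apply: Rabs_def1; lra.
- rewrite Rminus_diag Rabs_R0; lra.
Qed.

Lemma pdCl_eq j G x L : CDL j G x L -> pdCl j G x = L.
Proof. move=> H; apply: functional_extensionality => C; exact: pd_eq. Qed.

Lemma CDL_ext Om j G H x L : is_open Om -> Om x -> (forall z, Om z -> G z = H z) ->
  CDL j G x L -> CDL j H x L.
Proof. move=> Ho Hx E HG C; apply: (DL_ext Ho Hx _ (HG C)) => z Hz; by rewrite E. Qed.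

Lemma CDL_sum (I : finType) j (f : I -> pt m -> Cl m) x (L : I -> Cl m) :
  (forall i, CDL j (f i) x (L i)) -> CDL j (fun z => cl_sum (fun i => f i z)) x (cl_sum L).
Proof. move=> H C; rewrite /cl_sum; apply: DL_sum => i; exact: H. Qed.

Lemma CDL_add j G H x L1 L2 : CDL j G x L1 -> CDL j H x L2 ->
  CDL j (fun z => cl_add (G z) (H z)) x (cl_add L1 L2).
Proof. move=> H1 H2 C; exact: DL_plus. Qed.

Lemma CDL_bmul j s b G x L : CDL j G x L -> CDL j (fun z => bmul s b (G z)) x (bmul s b L).
Proof. move=> H C; rewrite /bmul; exact: DL_scalr. Qed.

Lemma CDL_sandwich j s t G x L : CDL j G x L ->
  CDL j (fun z => sandwich s t (G z)) x (sandwich s t L).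
Proof. move=> H; apply: CDL_sum => a; apply: CDL_bmul; exact: CDL_bmul. Qed.

Lemma CDL_xscale j l G x L : CDL j G x L ->
  CDL j (fun z => cl_scale (z l) (G z)) x
    (cl_add (cl_scale (x l) L) (if l == j then G x else @cl_zero m)).
Proof.
move=> H C; rewrite /cl_scale /cl_add.
have := DL_mul (DL_coord j l x) (H C).
rewrite (_ : (if l == j then 1 else 0) * G x C + x l * L C =
   x l * L C + (if l == j then G x else @cl_zero m) C); first by [].
rewrite /cl_zero; case: (l == j); lra.
Qed.

End Derivatives.

Section Schwarz.
Variable m : nat.
Implicit Types (a b i j k : 'I_m) (x y z : pt m).

Lemma shiftC x i j s t : i != j -> shift (shift x i s) j t = shift (shift x j t) i s.
Proof.
move=> Hij; apply: functional_extensionality => k; rewrite /shift.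
case: (k == i); case: (k == j) => //; lra.
Qed.

Lemma shiftS x j s t : shift (shift x j s) j t = shift x j (s + t).
Proof.
apply: functional_extensionality => k; rewrite /shift; case: (k == j) => //; lra.
Qed.

Lemma line_deriv (g : pt m -> R) (q : R -> pt m) (c0 : R) i z (d : R) :
  (forall u, q (c0 + u) = shift z i u) -> DL i g z d ->
  derivable_pt_lim (fun s => g (q s)) c0 d.
Proof.
move=> Hq H eps Heps; have [del Hdel] := H eps Heps.
exists del => h Hh0 Hh; have := Hdel h Hh0 Hh.
have E : q c0 = shift z i 0 by rewrite -(Hq 0) Rplus_0_r.
by rewrite Hq E Rplus_0_l.
Qed.

Lemma shift2_close x i j s t h : i != j -> 0 <= s <= h -> 0 <= t <= h ->
  forall k, Rabs (shift (shift x i s) j t k - x k) <= h.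
Proof.
move=> Hij Hs Ht k; rewrite /shift.
case: (k =P j) => [Hk|_].
- subst k; rewrite (negbTE (ltac:(by rewrite eq_sym) : j != i)).
  rewrite (_ : x j + t - x j = t); last lra. rewrite Rabs_right; lra.
- case: (k == i).
  + rewrite (_ : x k + s - x k = s); last lra. rewrite Rabs_right; lra.
  + rewrite Rminus_diag Rabs_R0; lra.
Qed.

Definition rect_diff (g : pt m -> R) x i j h :=
  g (shift (shift x i h) j h) - g (shift (shift x i h) j 0)
  - g (shift (shift x i 0) j h) + g x.

(* Mean value theorem applied twice: the second difference is h^2 times a
   mixed partial derivative at an interior point of the square. *)
Lemma rect_diff_mvt (Om : pt m -> Prop) (g : pt m -> R) x i j h :
  i != j -> 0 < h ->
  (forall s t, 0 <= s <= h -> 0 <= t <= h -> Om (shift (shift x i s) j t)) ->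
  pdiff_on Om i g -> pdiff_on Om j (pd i g) ->
  exists s t, 0 < s < h /\ 0 < t < h /\
    rect_diff g x i j h = h * h * pd j (pd i g) (shift (shift x i s) j t).
Proof.
move=> Hij Hh HOm Hg1 Hg2.
pose phi s := g (shift (shift x i s) j h) - g (shift (shift x i s) j 0).
pose phi' s := pd i g (shift (shift x i s) j h) - pd i g (shift (shift x i s) j 0).
have Hphi : forall c, 0 <= c <= h -> derivable_pt_lim phi c (phi' c).
  move=> c Hc; apply: derivable_pt_lim_minus.
  - apply: (line_deriv (i := i) (z := shift (shift x i c) j h)).
      by move=> u; rewrite -(shiftC _ _ _ Hij) shiftS.
    apply: (DL_pd Hg1); apply: HOm; lra.
  - apply: (line_deriv (i := i) (z := shift (shift x i c) j 0)).
      by move=> u; rewrite -(shiftC _ _ _ Hij) shiftS.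
    apply: (DL_pd Hg1); apply: HOm; lra.
have [s [Hs1 Hs2]] := MVT_cor2 phi phi' 0 h Hh Hphi.
pose psi t := pd i g (shift (shift x i s) j t).
have Hpsi : forall c, 0 <= c <= h ->
    derivable_pt_lim psi c (pd j (pd i g) (shift (shift x i s) j c)).
  move=> c Hc; apply: (line_deriv (i := j) (z := shift (shift x i s) j c)).
    by move=> u; rewrite shiftS.
  apply: (DL_pd Hg2); apply: HOm; lra.
have [t [Ht1 Ht2]] := MVT_cor2 psi _ 0 h Hh Hpsi.
exists s, t; split; first lra. split; first lra.
have E : rect_diff g x i j h = phi h - phi 0.
  rewrite /rect_diff /phi. rewrite (_ : shift (shift x i 0) j 0 = x); first lra.
  by rewrite !shift0.
rewrite E Hs1 /phi' -/(psi h) -/(psi 0) Ht1; ring.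
Qed.

Lemma rect_diff_sym (g : pt m -> R) x i j h : i != j -> rect_diff g x i j h = rect_diff g x j i h.
Proof.
move=> Hij; rewrite /rect_diff !(shiftC _ _ _ Hij) !shift0; lra.
Qed.

(* On any square inside Om spanned at y in the directions a, b, the two mixed
   partials of a C^2 function take a common value (at possibly different
   points of the square): both equal the second difference divided by h^2. *)
Lemma mixed_partials_meet (Om : pt m -> Prop) (g : pt m -> R) y a b h :
  a != b -> 0 < h -> Ck 2 Om g ->
  (forall i j, i != j -> forall s t, 0 <= s <= h -> 0 <= t <= h -> Om (shift (shift y i s) j t)) ->
  exists s1 t1 s2 t2, 0 <= s1 <= h /\ 0 <= t1 <= h /\ 0 <= s2 <= h /\ 0 <= t2 <= h /\
    pd a (pd b g) (shift (shift y b s1) a t1) = pd b (pd a g) (shift (shift y a s2) b t2).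
Proof.
move=> Hab Hh [_ Hg] HOm.
have Hba : b != a by rewrite eq_sym.
have [Hpa [_ Hpaa]] := Hg a; have [Hpb [_ Hpbb]] := Hg b.
have [s1 [t1 [Hs1 [Ht1 E1]]]] := rect_diff_mvt Hba Hh (HOm _ _ Hba) Hpb (proj1 (Hpbb a)).
have [s2 [t2 [Hs2 [Ht2 E2]]]] := rect_diff_mvt Hab Hh (HOm _ _ Hab) Hpa (proj1 (Hpaa b)).
exists s1, t1, s2, t2; do 4!(split; first lra).
rewrite rect_diff_sym // E2 in E1.
have Hhh : 0 < h * h by apply: Rmult_lt_0_compat.
apply: (Rmult_eq_reg_l (h * h)); lra.
Qed.

(* Schwarz: mixed second partials of a C^2 function commute, by continuity of
   the mixed partials and mixed_partials_meet on small squares. *)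
Lemma schwarz (Om : pt m -> Prop) (g : pt m -> R) : is_open Om -> Ck 2 Om g ->
  forall a b y, Om y -> pd a (pd b g) y = pd b (pd a g) y.
Proof.
move=> Ho Hg a b y Hy; case: (a =P b) => [->//|/eqP Hab].
have [_ Hg1] := Hg; have [_ [_ Hpaa]] := Hg1 a; have [_ [_ Hpbb]] := Hg1 b.
have [_ Hcab] := Hpbb a; have [_ Hcba] := Hpaa b.
apply: Rminus_diag_uniq; apply: NNPP => Hne.
set e := Rabs (pd a (pd b g) y - pd b (pd a g) y) / 2.
have He : 0 < e by rewrite /e; have := Rabs_pos_lt _ Hne; lra.
have [d0 [Hd0 Hb0]] := Ho y Hy.
have [d1 [Hd1 Hc1]] := Hcab y Hy e He.
have [d2 [Hd2 Hc2]] := Hcba y Hy e He.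
set h := Rmin d0 (Rmin d1 d2) / 2.
have Hh : 0 < h.
  have : 0 < Rmin d0 (Rmin d1 d2) by apply: Rmin_glb_lt => //; apply: Rmin_glb_lt.
  rewrite /h; lra.
have Hh0 : h < d0 by rewrite /h; have := Rmin_l d0 (Rmin d1 d2); lra.
have Hh1 : h < d1 by rewrite /h; have := Rmin_r d0 (Rmin d1 d2); have := Rmin_l d1 d2; lra.
have Hh2 : h < d2 by rewrite /h; have := Rmin_r d0 (Rmin d1 d2); have := Rmin_r d1 d2; lra.
have HOm : forall i j, i != j -> forall s t, 0 <= s <= h -> 0 <= t <= h ->
    Om (shift (shift y i s) j t).
  move=> i j Hij s t Hs Ht; apply: Hb0 => k; have := shift2_close y Hij Hs Ht k; lra.
have [s1 [t1 [s2 [t2 [Hs1 [Ht1 [Hs2 [Ht2 Eq]]]]]]]] := mixed_partials_meet Hab Hh Hg HOm.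
have Hba : b != a by rewrite eq_sym.
have C1 := Hc1 _ (HOm _ _ Hba s1 t1 Hs1 Ht1)
   (fun k => Rle_lt_trans _ _ _ (shift2_close y Hba Hs1 Ht1 k) Hh1).
have C2 := Hc2 _ (HOm _ _ Hab s2 t2 Hs2 Ht2)
   (fun k => Rle_lt_trans _ _ _ (shift2_close y Hab Hs2 Ht2 k) Hh2).
rewrite -Eq /e in C2; rewrite /e in C1.
move: C1 C2; split_Rabs; lra.
Qed.

End Schwarz.

(* The Dirac operator whose basis multiplications are given by s: for s = sL
   it is the left operator  sum_j e_j d_j G, for s = sR the right one. *)
Definition dirac (m : nat) (s : 'I_m -> {set 'I_m} -> R) (G : pt m -> Cl m) : pt m -> Cl m :=
  fun y => cl_sum (fun j => bmul s j (pdCl j G y)).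

(* Multiplication of a field by the vector variable x, on the side given by t:
   xmult sR G is x |-> G(x) x and xmult sL G is x |-> x G(x). *)
Definition xmult (m : nat) (t : 'I_m -> {set 'I_m} -> R) (G : pt m -> Cl m) : pt m -> Cl m :=
  fun z => cl_sum (fun l => cl_scale (z l) (bmul t l (G z))).

Section DiracOperators.
Variable m : nat.
Implicit Types (G : pt m -> Cl m) (u : Cl m) (x : pt m).

Lemma dirac_lE G : dirac_l G = dirac sL G.
Proof. apply: functional_extensionality => y; apply: cl_sum_ext => j; exact: mul_eL. Qed.

Lemma dirac_rE G : dirac_r G = dirac sR G.
Proof. apply: functional_extensionality => y; apply: cl_sum_ext => j; exact: mul_eR. Qed.

Lemma mul_vec u x : cl_mul u (cl_vec x) = cl_sum (fun l => cl_scale (x l) (Re l u)).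
Proof.
apply: functional_extensionality => C.
rewrite /cl_sum /cl_scale.
rewrite [RHS](eq_bigr (fun l => x l * cl_mul u (cl_e l) C)); last by move=> l _; rewrite mul_eR.
rewrite /cl_mul /cl_vec /cl_sum.
rewrite (eq_bigr (fun A => \big[Rplus/0]_(B | symdiff A B == C)
    \big[Rplus/0]_(l : 'I_m) (x l * (u A * cl_e l B * blade_sign A B)))); last first.
  move=> A _; apply: eq_bigr => B _.
  rewrite -sum_mulr -sum_mull; apply: eq_bigr => l _; ring.
rewrite (eq_bigr (fun A => \big[Rplus/0]_(l : 'I_m) \big[Rplus/0]_(B | symdiff A B == C)
    (x l * (u A * cl_e l B * blade_sign A B)))); last by move=> A _; rewrite exchange_big.
rewrite exchange_big; apply: eq_bigr => l _.
rewrite -sum_mulr; apply: eq_bigr => A _; by rewrite -sum_mulr.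
Qed.

Lemma vec_mul u x : cl_mul (cl_vec x) u = cl_sum (fun l => cl_scale (x l) (Le l u)).
Proof.
apply: functional_extensionality => C.
rewrite /cl_sum /cl_scale.
rewrite [RHS](eq_bigr (fun l => x l * cl_mul (cl_e l) u C)); last by move=> l _; rewrite mul_eL.
rewrite /cl_mul /cl_vec /cl_sum.
rewrite (eq_bigr (fun A => \big[Rplus/0]_(B | symdiff A B == C)
    \big[Rplus/0]_(l : 'I_m) (x l * (cl_e l A * u B * blade_sign A B)))); last first.
  move=> A _; apply: eq_bigr => B _.
  rewrite -sum_mull -sum_mull; apply: eq_bigr => l _; ring.
rewrite (eq_bigr (fun A => \big[Rplus/0]_(l : 'I_m) \big[Rplus/0]_(B | symdiff A B == C)
    (x l * (cl_e l A * u B * blade_sign A B)))); last by move=> A _; rewrite exchange_big.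
rewrite exchange_big; apply: eq_bigr => l _.
rewrite -sum_mulr; apply: eq_bigr => A _; by rewrite -sum_mulr.
Qed.

Lemma xmultR G : (fun x => cl_mul (G x) (cl_vec x)) = xmult sR G.
Proof. apply: functional_extensionality => x; exact: mul_vec. Qed.

Lemma xmultL G : (fun x => cl_mul (cl_vec x) (G x)) = xmult sL G.
Proof. apply: functional_extensionality => x; exact: vec_mul. Qed.

End DiracOperators.

Section DiracCalculus.
Variables (m : nat) (Om : pt m -> Prop).
Hypothesis hOm : is_open Om.
Implicit Types (s t : 'I_m -> {set 'I_m} -> R) (G H : pt m -> Cl m) (y : pt m).

Definition pdiff_field G := forall j y, Om y -> CDL j G y (pdCl j G y).

Lemma pdiff_fieldP G : (forall j y, Om y -> exists L, CDL j G y L) -> pdiff_field G.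
Proof. move=> H j y Hy; have [L HL] := H j y Hy; by rewrite (pdCl_eq HL). Qed.

Lemma Ck_mono k g : Ck k.+1 Om g -> Ck k Om g.
Proof.
elim: k g => [|k IH] g /=; first by case.
case=> Hc H; split => // j; have [Hp Hk] := H j; split => //; exact: IH.
Qed.

Lemma CkCl_mono k G : CkCl k.+1 Om G -> CkCl k Om G.
Proof. move=> H A; exact: Ck_mono (H A). Qed.

Lemma CkCl_pdCl k j G : CkCl k.+1 Om G -> CkCl k Om (pdCl j G).
Proof. by move=> H A; have [_ H'] := H A; have [_ Hk] := H' j. Qed.

Lemma CkCl_pdiff k G : CkCl k.+1 Om G -> pdiff_field G.
Proof. by move=> H j y Hy A; have [_ H'] := H A; have [Hp _] := H' j; exact: DL_pd Hp Hy. Qed.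

Lemma pdCl_schwarz a b G y : CkCl 2 Om G -> Om y -> pdCl a (pdCl b G) y = pdCl b (pdCl a G) y.
Proof. move=> HG Hy; apply: functional_extensionality => A; exact: schwarz hOm (HG A) a b y Hy. Qed.

Lemma pd_zero_on j (g : pt m -> R) y : (forall z, Om z -> g z = 0) -> Om y -> pd j g y = 0.
Proof.
move=> H Hy; apply: pd_eq; apply: (DL_ext hOm Hy _ (DL_const j y 0)) => z Hz; by rewrite H.
Qed.

Lemma pdCl_zero_on j G y : zero_on Om G -> Om y -> pdCl j G y = @cl_zero m.
Proof. move=> HG Hy; apply: zero_fun => A; apply: pd_zero_on Hy => z Hz; exact: HG. Qed.

Lemma pdCl_kvector k j G y : (forall z, Om z -> is_kvector k (G z)) -> Om y ->
  is_kvector k (pdCl j G y).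
Proof. move=> HG Hy A HA; apply: pd_zero_on Hy => z Hz; exact: HG. Qed.

Lemma pdiff_field_ext G H : pdiff_field H -> (forall z, Om z -> G z = H z) -> pdiff_field G.
Proof.
move=> HH E; apply: pdiff_fieldP => j y Hy; exists (pdCl j H y).
apply: (CDL_ext hOm Hy _ (HH j y Hy)) => z Hz; by rewrite E.
Qed.

Lemma CDL_dirac s j G y : (forall c, pdiff_field (pdCl c G)) -> Om y ->
  CDL j (dirac s G) y (cl_sum (fun c => bmul s c (pdCl j (pdCl c G) y))).
Proof. move=> HG Hy; apply: CDL_sum => c; apply: CDL_bmul; exact: HG. Qed.

Lemma pdiff_field_dirac s G : (forall c, pdiff_field (pdCl c G)) -> pdiff_field (dirac s G).
Proof. move=> HG; apply: pdiff_fieldP => j y Hy; eexists; exact: CDL_dirac. Qed.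

Lemma pdCl_dirac s j G y : (forall c, pdiff_field (pdCl c G)) -> Om y ->
  pdCl j (dirac s G) y = cl_sum (fun c => bmul s c (pdCl j (pdCl c G) y)).
Proof. by move=> HG Hy; rewrite (pdCl_eq (CDL_dirac s j HG Hy)). Qed.

Lemma pdCl_ext j G H y : pdiff_field H -> (forall z, Om z -> G z = H z) -> Om y ->
  pdCl j G y = pdCl j H y.
Proof.
move=> HH E Hy; apply: pdCl_eq; apply: (CDL_ext hOm Hy _ (HH j y Hy)) => z Hz.
by rewrite E.
Qed.

Lemma dirac_ext s G H y : pdiff_field H -> (forall z, Om z -> G z = H z) -> Om y ->
  dirac s G y = dirac s H y.
Proof. by move=> HH E Hy; apply: cl_sum_ext => j; rewrite (pdCl_ext j HH E Hy). Qed.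

Lemma pdiff_field_add G H : pdiff_field G -> pdiff_field H ->
  pdiff_field (fun z => cl_add (G z) (H z)).
Proof.
move=> HG HH; apply: pdiff_fieldP => j y Hy; eexists; exact: CDL_add (HG j y Hy) (HH j y Hy).
Qed.

Lemma dirac_add s G H y : pdiff_field G -> pdiff_field H -> Om y ->
  dirac s (fun z => cl_add (G z) (H z)) y = cl_add (dirac s G y) (dirac s H y).
Proof.
move=> HG HH Hy; rewrite /dirac -cl_sum_add; apply: cl_sum_ext => j.
by rewrite (pdCl_eq (CDL_add (HG j y Hy) (HH j y Hy))) bmul_add.
Qed.

Lemma pdiff_field_sandwich s t G : pdiff_field G -> pdiff_field (fun z => sandwich s t (G z)).
Proof. move=> HG; apply: pdiff_fieldP => j y Hy; eexists; exact: CDL_sandwich (HG j y Hy). Qed.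

Lemma pdCl_sandwich s t j G y : pdiff_field G -> Om y ->
  pdCl j (fun z => sandwich s t (G z)) y = sandwich s t (pdCl j G y).
Proof. by move=> HG Hy; rewrite (pdCl_eq (CDL_sandwich s t (HG j y Hy))). Qed.

Lemma CDL_xmult t G j y : CDL j G y (pdCl j G y) ->
  CDL j (xmult t G) y (cl_add (xmult t (pdCl j G) y) (bmul t j (G y))).
Proof.
move=> HG; have := CDL_sum (fun l => CDL_xscale l (CDL_bmul t l HG)).
by rewrite cl_sum_add cl_sum_delta.
Qed.

Lemma pdiff_field_xmult t G : pdiff_field G -> pdiff_field (xmult t G).
Proof. move=> HG; apply: pdiff_fieldP => j y Hy; eexists; exact: CDL_xmult (HG j y Hy). Qed.

Lemma dirac_xmult s t G y : (forall b c u, bmul s b (bmul t c u) = bmul t c (bmul s b u)) ->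
  pdiff_field G -> Om y ->
  dirac s (xmult t G) y = cl_add (xmult t (dirac s G) y) (sandwich s t (G y)).
Proof.
move=> comm_st HG Hy; rewrite /dirac.
under cl_sum_ext => j do rewrite (pdCl_eq (CDL_xmult t (HG j y Hy))) bmul_add.
rewrite cl_sum_add; congr cl_add.
rewrite /xmult; under cl_sum_ext => j do rewrite bmul_sum.
rewrite cl_sum_exch; apply: cl_sum_ext => l.
by rewrite bmul_sum -cl_sum_scale; apply: cl_sum_ext => j; rewrite bmul_scale comm_st.
Qed.

End DiracCalculus.

Definition infra (m : nat) (s t : 'I_m -> {set 'I_m} -> R) (F : pt m -> Cl m) : pt m -> Cl m :=
  fun z => cl_sum (fun a => cl_sum (fun b => bmul s a (bmul t b (pdCl a (pdCl b F) z)))).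

Section InframonogenicCriterion.
Variables (m : nat) (Om : pt m -> Prop) (F : pt m -> Cl m) (s t : 'I_m -> {set 'I_m} -> R).
Hypotheses (hOm : is_open Om) (hF : CkCl 3 Om F) (hk : forall x, Om x -> is_kvector m./2 (F x)).
Hypotheses (anti_s : anticommuting s) (anti_t : anticommuting t)
  (comm_st : forall b c u, bmul s b (bmul t c u) = bmul t c (bmul s b u))
  (sandwich_half : forall u, is_kvector m./2 u -> sandwich s t u = @cl_zero m).
Implicit Types (a b c j l : 'I_m) (y z : pt m).

Local Notation D := (dirac s).
Local Notation F2 b c := (pdCl b (pdCl c F)).
Local Notation F3 a b c := (pdCl a (pdCl b (pdCl c F))).
Local Notation mlap G := (fun z => cl_opp (cl_sum (fun b => pdCl b (pdCl b G) z))).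

Lemma pdiff_F : pdiff_field Om F.
Proof. exact: CkCl_pdiff hF. Qed.

Lemma pdiff_F1 c : pdiff_field Om (pdCl c F).
Proof. exact: CkCl_pdiff (CkCl_pdCl c hF). Qed.

Lemma pdiff_F2 b c : pdiff_field Om (F2 b c).
Proof. exact: CkCl_pdiff (CkCl_pdCl b (CkCl_pdCl c hF)). Qed.

Lemma F2_sym b c y : Om y -> F2 b c y = F2 c b y.
Proof. exact: pdCl_schwarz (CkCl_mono hF). Qed.

Lemma F3_sym12 a b c y : Om y -> F3 a b c y = F3 b a c y.
Proof. exact: pdCl_schwarz (CkCl_pdCl c hF). Qed.

Lemma F3_sym23 a b c y : Om y -> F3 a b c y = F3 a c b y.
Proof. move=> Hy; apply: (pdCl_ext hOm a (pdiff_F2 c b) _ Hy) => z; exact: F2_sym. Qed.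

Lemma F2_kvector b c y : Om y -> is_kvector m./2 (F2 b c y).
Proof. by move=> Hy; do 2!apply: (pdCl_kvector hOm) => // ? ?. Qed.

Lemma CDL_mlap a y : Om y -> CDL a (mlap F) y (cl_opp (cl_sum (fun b => F3 a b b y))).
Proof.
move=> Hy C; rewrite /cl_opp.
apply: (DL_fext (G := fun z => -1 * cl_sum (fun b => F2 b b z) C)); first by move=> z; lra.
rewrite (_ : - _ = -1 * cl_sum (fun b => F3 a b b y) C); last lra.
apply: DL_scal; apply: CDL_sum => b; exact: pdiff_F2.
Qed.

Lemma pdiff_mlap : pdiff_field Om (mlap F).
Proof. apply: pdiff_fieldP => a y Hy; eexists; exact: CDL_mlap. Qed.

Lemma dirac2_F y : Om y -> D (D F) y = mlap F y.
Proof.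
move=> Hy; rewrite {1}/dirac.
under cl_sum_ext => b do rewrite (pdCl_dirac s b pdiff_F1 Hy).
by apply: anticomm_sum => // b c; exact: F2_sym.
Qed.

Lemma pdiff_dirac2_F : pdiff_field Om (D (D F)).
Proof. apply: (pdiff_field_ext hOm pdiff_mlap) => y; exact: dirac2_F. Qed.

Lemma dirac3_F y : Om y ->
  D (D (D F)) y = cl_opp (cl_sum (fun a => bmul s a (cl_sum (fun b => F3 a b b y)))).
Proof.
move=> Hy; rewrite (dirac_ext hOm s pdiff_mlap dirac2_F Hy) /dirac -cl_sum_opp.
by apply: cl_sum_ext => a; rewrite (pdCl_eq (CDL_mlap a Hy)) bmul_opp.
Qed.

Lemma infra_pdCl l y : zero_on Om (infra s t F) -> Om y ->
  cl_sum (fun a => cl_sum (fun b => bmul s a (bmul t b (F3 l a b y)))) = @cl_zero m.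
Proof.
move=> HI Hy; rewrite -(pdCl_zero_on hOm l HI Hy); symmetry; apply: pdCl_eq.
apply: CDL_sum => a; apply: CDL_sum => b; do 2!apply: CDL_bmul; exact: pdiff_F2.
Qed.

(* Inframonogenic fields are 3-monogenic: by the Clifford relations, applying
   the t-side Dirac operator to the inframonogenic expression gives
   - sum_a e_a d_a (Laplacian F), which is D^3 F. *)
Lemma infra_dirac3 y : zero_on Om (infra s t F) -> Om y -> D (D (D F)) y = @cl_zero m.
Proof.
move=> HI Hy; rewrite dirac3_F // -(cl_sum_zero 'I_m).
under [in RHS]cl_sum_ext => l do rewrite -(bmul_zero t l) -(infra_pdCl l HI Hy) bmul_sum.
rewrite cl_sum_exch -cl_sum_opp; apply: cl_sum_ext => a.
have lap_a : cl_sum (fun l => bmul t l (cl_sum (fun b => bmul t b (F3 l a b y)))) =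
             cl_opp (cl_sum (fun b => F3 a b b y)).
  rewrite (anticomm_sum anti_t) => [|l b]; last by rewrite F3_sym12 // F3_sym23 // F3_sym12.
  by congr cl_opp; apply: cl_sum_ext => b; rewrite F3_sym12.
rewrite -bmul_opp -lap_a bmul_sum; apply: cl_sum_ext => l.
by rewrite comm_st bmul_sum.
Qed.

Lemma sandwich_F y : Om y -> sandwich s t (F y) = @cl_zero m.
Proof. by move=> Hy; apply/sandwich_half/hk. Qed.

Lemma sandwich_dirac2_F y : Om y -> sandwich s t (D (D F) y) = @cl_zero m.
Proof.
move=> Hy; rewrite dirac2_F // sandwich_opp sandwich_half ?cl_opp_zero // => A HA.
by rewrite /cl_sum big1 // => b _; apply: F2_kvector.
Qed.

Lemma pdiff_dirac_F : pdiff_field Om (D F).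
Proof. exact: (pdiff_field_dirac s pdiff_F1). Qed.

Lemma dirac_xF y : Om y -> D (xmult t F) y = xmult t (D F) y.
Proof. by move=> Hy; rewrite (dirac_xmult comm_st pdiff_F Hy) sandwich_F // cl_add0. Qed.

Lemma dirac2_xF y : Om y ->
  D (D (xmult t F)) y = cl_add (xmult t (D (D F)) y) (sandwich s t (D F y)).
Proof.
move=> Hy; rewrite (dirac_ext hOm s (pdiff_field_xmult t pdiff_dirac_F) dirac_xF Hy).
exact: dirac_xmult comm_st pdiff_dirac_F Hy.
Qed.

(* D^3 (x F) = x D^3 F - 2 (inframonogenic expression): the sandwich terms
   produced by the Leibniz rule vanish on the (m/2)-vector fields F and D^2 F,
   and the remaining one is computed with sandwich_bmul. *)
Lemma dirac3_xF y : Om y ->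
  D (D (D (xmult t F))) y = cl_add (xmult t (D (D (D F))) y) (cl_scale (-2) (infra s t F y)).
Proof.
move=> Hy.
have pd_xD2F := pdiff_field_xmult t pdiff_dirac2_F.
have pd_sDF := pdiff_field_sandwich s t pdiff_dirac_F.
rewrite (dirac_ext hOm s (pdiff_field_add pd_xD2F pd_sDF) dirac2_xF Hy).
rewrite (dirac_add s pd_xD2F pd_sDF Hy) (dirac_xmult comm_st pdiff_dirac2_F Hy).
rewrite sandwich_dirac2_F // cl_add0; congr cl_add.
rewrite /dirac /infra -cl_sum_scale; apply: cl_sum_ext => a.
rewrite (pdCl_sandwich s t a pdiff_dirac_F Hy) (pdCl_dirac s a pdiff_F1 Hy).
rewrite sandwich_sum bmul_sum -cl_sum_scale; apply: cl_sum_ext => c.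
rewrite (sandwich_bmul anti_s comm_st) (sandwich_half (F2_kvector a c Hy)).
by rewrite bmul_zero cl_opp_zero cl_0add bmul_scale.
Qed.

Lemma xmult_zero G y : G y = @cl_zero m -> xmult t G y = @cl_zero m.
Proof.
move=> H; rewrite /xmult H -[RHS](cl_sum_zero 'I_m); apply: cl_sum_ext => l.
by apply: zero_fun => A; rewrite bmul_zero /cl_scale /cl_zero; lra.
Qed.

Lemma infra_criterion : zero_on Om (infra s t F) <->
  zero_on Om (D (D (D F))) /\ zero_on Om (D (D (D (xmult t F)))).
Proof.
split.
- move=> HI; have D3F y : Om y -> D (D (D F)) y = @cl_zero m by exact: infra_dirac3.
  split=> y Hy A; first by rewrite D3F.
  rewrite (dirac3_xF Hy) (xmult_zero (D3F y Hy)) (zero_fun (HI y Hy)).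
  rewrite /cl_add /cl_scale /cl_zero; lra.
- case=> H3F H3xF y Hy A; have := H3xF y Hy A.
  rewrite (dirac3_xF Hy) (xmult_zero (zero_fun (H3F y Hy))) /cl_add /cl_scale /cl_zero.
  lra.
Qed.

End InframonogenicCriterion.

Section Instances.
Variables (m : nat) (Om : pt m -> Prop) (F : pt m -> Cl m).

Lemma inframonogenicE : inframonogenic Om F <-> zero_on Om (infra sL sR F).
Proof.
suff -> : infra sL sR F = fun x => cl_sum (fun p : 'I_m * 'I_m =>
     cl_mul (cl_mul (cl_e p.1) (pdCl p.1 (pdCl p.2 F) x)) (cl_e p.2)) by [].
apply: functional_extensionality => x.
rewrite /infra -(cl_sum_pair (fun a b => Le a (Re b (pdCl a (pdCl b F) x)))).
by apply: cl_sum_ext => p; rewrite mul_eL mul_eR LR_comm.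
Qed.

(* Read with right outer multiplications first, the expression is the same
   on Om, since the Hessian of F is symmetric there. *)
Lemma infra_swap z : is_open Om -> CkCl 2 Om F -> Om z -> infra sR sL F z = infra sL sR F z.
Proof.
move=> hOm hF Hz; rewrite /infra cl_sum_exch; apply: cl_sum_ext => b.
apply: cl_sum_ext => a; by rewrite (pdCl_schwarz hOm a b hF Hz) LR_comm.
Qed.

End Instances.

Theorem mainTheorem10 (m : nat) (hm : ~~ odd m) (Om : pt m -> Prop) (F : pt m -> Cl m)
  (hOm : is_open Om) (hF : CkCl 3 Om F)
  (hk : forall x, Om x -> is_kvector m./2 (F x)) :
  (inframonogenic Om F <->
     left_3_monogenic Om F /\ left_3_monogenic Om (fun x => cl_mul (F x) (cl_vec x))) /\
  (inframonogenic Om F <->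
     right_3_monogenic Om F /\ right_3_monogenic Om (fun x => cl_mul (cl_vec x) (F x))).
Proof.
have halves : (m./2 + m./2)%N = m by rewrite addnn -[RHS](odd_double_half m) (negbTE hm).
have comm_RL b c (u : Cl m) : Re b (Le c u) = Le c (Re b u) by rewrite LR_comm.
have half_LR u : is_kvector m./2 u -> sandwich sL sR u = @cl_zero m.
  exact: sandwich_kvector halves.
have half_RL u : is_kvector m./2 u -> sandwich sR sL u = @cl_zero m.
  by move=> Hu; rewrite (sandwich_swap (@LR_comm m)); exact: half_LR.
have infra_RL : zero_on Om (infra sR sL F) <-> zero_on Om (infra sL sR F).
  have hF2 := CkCl_mono hF.
  split=> H y Hy A; [rewrite -(infra_swap hOm hF2 Hy) | rewrite (infra_swap hOm hF2 Hy)];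
  exact: H.
rewrite /left_3_monogenic /right_3_monogenic !dirac_lE !dirac_rE xmultR xmultL.
rewrite inframonogenicE; split.
- exact: (infra_criterion hOm hF hk Le_anticomm Re_anticomm (@LR_comm m) half_LR).
- rewrite -infra_RL; exact: (infra_criterion hOm hF hk Re_anticomm Le_anticomm comm_RL half_RL).
Qed.
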